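(* Let $r\ge3$, $n>r$ and $1<i<r$. Let $M=(E_{r-1}E_{r-2}\cdots E_1)(E_{r+1}E_{r+2}\cdots E_n)1_\omega\in T$. Then $(vF_{i-1}E_{i-1}-1)M=M(vF_iE_i-1)$ in $T$.
   Context: $T$ is the $\mathbb{Q}(v)$-algebra with generators $E_i,F_i,K_i^{\pm1}$ ($1\le i\le n$, indices mod $n$) and relations: $K_iK_j=K_jK_i$; $K_iK_i^{-1}=K_i^{-1}K_i=1$; $K_iE_j=v^{\epsilon^+(i,j)}E_jK_i$; $K_iF_j=v^{-\epsilon^+(i,j)}F_jK_i$ ($\epsilon^+(i,j)=1$ if $j=i$, $-1$ if $j\equiv i-1\pmod n$, $0$ otherwise); $E_iF_j-F_jE_i=\delta_{ij}\frac{K_iK_{i+1}^{-1}-K_i^{-1}K_{i+1}}{v-v^{-1}}$; $E_iE_j=E_jE_i$, $F_iF_j=F_jF_i$ if $i-j\not\equiv\pm1$; $E_i^2E_j-(v+v^{-1})E_iE_jE_i+E_jE_i^2=0$, $F_i^2F_j-(v+v^{-1})F_iF_jF_i+F_jF_i^2=0$ if $i-j\equiv\pm1\pmod n$; $K_1\cdots K_n=v^r$; $\prod_{j=0}^r(K_i-v^j)=0$. For a composition $\lambda$ of $r$ into $n$ nonnegative parts, $1_\lambda=\prod_{i=1}^n\prod_{s=1}^{\lambda_i}\frac{K_iv^{-s+1}-K_i^{-1}v^{s-1}}{v^s-v^{-s}}$; $\omega=(1,\dots,1,0,\dots,0)$ with $r$ ones and $n-r$ zeros. *)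

From HB Require Import structures.
From mathcomp Require Import all_boot all_order all_algebra.
Set Implicit Arguments. Unset Strict Implicit. Unset Printing Implicit Defensive.
Import Order.TTheory GRing.Theory Num.Theory.
Local Open Scope ring_scope.

Definition Qv : fieldType := {fraction {poly rat}}.
Definition vq : Qv := tofrac 'X.

(* Indices are natural numbers read modulo n (index n = index 0). *)
Definition epsp (n i j : nat) : int :=
  if j == i %[mod n] then 1 else if j.+1 == i %[mod n] then -1 else 0.

(* T is the algebra presented by
   these generators and relations, i.e. the initial such algebra. *)
Definition T_relations (n r : nat) (A : algType Qv)
    (E F K Kinv : nat -> A) : Prop :=
  (
      (forall i, E (i + n)%N = E i /\ F (i + n)%N = F i /\
                 K (i + n)%N = K i /\ Kinv (i + n)%N = Kinv i) /\
      (forall i j, K i * K j = K j * K i) /\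
      (forall i, K i * Kinv i = 1 /\ Kinv i * K i = 1) /\
      (forall i j, K i * E j = (vq ^ epsp n i j) *: (E j * K i)) /\
      (forall i j, K i * F j = (vq ^ (- epsp n i j)) *: (F j * K i)) /\
      (forall i j, E i * F j - F j * E i =
         if i == j %[mod n] then
           (vq - vq^-1)^-1 *: (K i * Kinv i.+1 - Kinv i * K i.+1)
         else 0) /\
      (forall i j, ~~ (i == j.+1 %[mod n]) -> ~~ (j == i.+1 %[mod n]) ->
         E i * E j = E j * E i /\ F i * F j = F j * F i) /\
      (forall i j, (i == j.+1 %[mod n]) || (j == i.+1 %[mod n]) ->
         E i ^+ 2 * E j - (vq + vq^-1) *: (E i * E j * E i) + E j * E i ^+ 2 = 0
         /\ F i ^+ 2 * F j - (vq + vq^-1) *: (F i * F j * F i) + F j * F i ^+ 2 = 0) /\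
      \prod_(1 <= i < n.+1) K i = (vq ^+ r)%:A /\
      (forall i, \prod_(0 <= j < r.+1) (K i - (vq ^+ j)%:A) = 0)).

Definition one_lam (n : nat) (A : algType Qv) (K Kinv : nat -> A)
    (lam : nat -> nat) : A :=
  \prod_(1 <= i < n.+1) \prod_(1 <= s < (lam i).+1)
     ((vq ^+ s - vq ^- s)^-1 *:
        (vq ^ (1 - (s%:Z)) *: K i - vq ^ ((s%:Z) - 1) *: Kinv i)).

Definition omega (r : nat) (i : nat) : nat := if (1 <= i <= r)%N then 1%N else 0%N.

From HB Require Import structures.
From mathcomp Require Import all_boot all_order all_algebra.
From mathcomp Require Import zify ring.

(* Write i = p + 1.  The element M factors as
     M = (E_{r-1} ... E_{p+2}) E_{p+1} E_p x,   x = (E_{p-1} ... E_1)(E_{r+1} ... E_n) 1_omega,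
   where F_p E_p commutes with the first factor and F_{p+1} E_{p+1} commutes with x,
   since the relevant E_j are far from p resp. p + 1 and F_j E_j has weight 0.
   The claim thus reduces to F_p E_p E_{p+1} E_p x = E_{p+1} E_p F_{p+1} E_{p+1} x,
   a computation with the relations in ranks p, p + 1 (commutators [E_j, F_j] on
   weight vectors, truncation of weights below v^0, and the Serre relation), once
   the weights of x are known: K_p, K_{p+1}, K_{p+2} act on x by 1, v, v.
   The E_j contribute telescoping sums to these weights, and K_m acts by v on 1_omega
   for m <= r: the eigenvalues of K_j on 1_omega are at least v^{omega_j}, because
   its factor K_j - K_j^{-1} kills the eigenvalue 1, while their product is
   K_1 ... K_n = v^r = v^{omega_1 + ... + omega_n}. *)

Set Implicit Arguments.
Unset Strict Implicit.
Unset Printing Implicit Defensive.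
Import GRing.Theory.
Local Open Scope ring_scope.

Section CommutingOperators.
Variables (R : fieldType) (A : algType R).

Lemma commr_scale (x y : A) (c : R) : GRing.comm x y -> GRing.comm x (c *: y).
Proof. by move=> cxy; rewrite /GRing.comm -scalerAr cxy scalerAl. Qed.

Lemma commr_subC (x y : A) (c : R) : GRing.comm x y -> GRing.comm x (y - c%:A).
Proof. by move=> cxy; apply: commrB => //; apply/commr_sym/comm_alg. Qed.

Lemma commr_prod_subC (I : Type) (s : seq I) (c : I -> R) (x y : A) :
  GRing.comm x y -> GRing.comm x (\prod_(k <- s) (y - (c k)%:A)).
Proof. by move=> cxy; apply: commr_prod => k _; apply: commr_subC. Qed.

Lemma eigen_prod_subC (I : Type) (s : seq I) (c : I -> R) (x y : A) (lam : R) :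
  x * y = lam *: y ->
  (\prod_(k <- s) (x - (c k)%:A)) * y = (\prod_(k <- s) (lam - c k)) *: y.
Proof.
move=> xy; elim: s => [|k s IHs]; first by rewrite !big_nil mul1r scale1r.
rewrite !big_cons -mulrA IHs -scalerAr mulrBl xy mulr_algl -scalerBl.
by rewrite scalerA mulrC.
Qed.

Lemma eigen_prod (I : eqType) (s : seq I) (X : I -> A) (c : I -> R) (y : A) :
  (forall j, j \in s -> X j * y = c j *: y) ->
  (\prod_(j <- s) X j) * y = (\prod_(j <- s) c j) *: y.
Proof.
elim: s => [|j s IHs] Xy; first by rewrite !big_nil mul1r scale1r.
rewrite !big_cons -mulrA IHs => [|k ks]; last by rewrite Xy // in_cons ks orbT.
by rewrite -scalerAr Xy ?mem_head // scalerA mulrC.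
Qed.

Lemma mulr_prod_eq0 (I : eqType) (s : seq I) (f : I -> A) (x : A) j :
  j \in s -> (forall i, i \in s -> GRing.comm x (f i)) -> x * f j = 0 ->
  x * \prod_(i <- s) f i = 0.
Proof.
elim: s => [//|i s IHs] js cxf xfj; rewrite big_cons mulrA.
have [<-|neq_ji] := eqVneq j i; first by rewrite xfj mul0r.
rewrite (cxf i (mem_head _ _)) -mulrA IHs ?mulr0 //.
  by move: js; rewrite in_cons (negbTE neq_ji).
by move=> k ks; apply: cxf; rewrite in_cons ks orbT.
Qed.

Section LowestEigenvalues.
Variable q : R.
Hypothesis q_inj : injective (GRing.exp q).

Lemma q_neq0 : q != 0.
Proof. by apply/eqP => q0; have := @q_inj 1 2; rewrite q0 !expr0n => /(_ erefl). Qed.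

Lemma scale_expr_fixed_eq0 (e : nat) (y : A) : (0 < e)%N -> q ^+ e *: y = y -> y = 0.
Proof.
move=> e_gt0 /eqP; rewrite -subr_eq0 -{2}[y]scale1r -scalerBl scaler_eq0 subr_eq0.
case/orP=> [/eqP qe1|/eqP //].
by move: qe1; rewrite -(expr0 q) => /q_inj e0; rewrite e0 in e_gt0.
Qed.

Variables (I : eqType) (X : I -> A).
Hypothesis X_comm : forall i j, GRing.comm (X i) (X j).

Lemma eigen_lowest_of_prod (s : seq I) (a b : I -> nat) (d : nat) (y : A) :
  (forall j, j \in s -> (\prod_(k < b j) (X j - (q ^+ (a j + k))%:A)) * y = 0) ->
  q ^+ d *: ((\prod_(j <- s) X j) * y) = q ^+ (\sum_(j <- s) a j)%N *: y ->
  forall j, j \in s -> X j * y = q ^+ a j *: y.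
Proof.
elim: s d y => [//|h s IHs] d y ann; rewrite big_cons big_cons exprD.
have ann_s j : j \in s -> (\prod_(k < b j) (X j - (q ^+ (a j + k))%:A)) * y = 0.
  by move=> js; apply: ann; rewrite in_cons js orbT.
move: (ann h (mem_head _ _)) => {ann}.
elim: (b h) y d ann_s => [|c IHc] y d ann_s ann_h rel.
  by move: ann_h; rewrite big_ord0 mul1r => -> j _; rewrite mulr0 scaler0.
(* The first c factors map y to u, on which X h acts by q^(a h + c): the defect of
   the product relation grows to d + c, so u = 0 unless c = 0. *)
set P := \prod_(k < c) (X h - (q ^+ (a h + k))%:A).
have cPX i : GRing.comm P (X i) by apply/commr_sym/commr_prod_subC.
set u := P * y.
have Xh_u : X h * u = q ^+ (a h + c) *: u.
  apply/eqP; rewrite -subr_eq0 -mulr_algl -mulrBl /u mulrA.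
  have cXP : GRing.comm (X h - (q ^+ (a h + c))%:A) P.
    by apply/commr_prod_subC/commr_sym/commr_subC.
  by move: ann_h; rewrite (big_ord_recr c) /= -/P cXP => ->.
have ann_u j : j \in s -> (\prod_(k < b j) (X j - (q ^+ (a j + k))%:A)) * u = 0.
  move=> js; rewrite /u mulrA.
  have cQP : GRing.comm (\prod_(k < b j) (X j - (q ^+ (a j + k))%:A)) P.
    by apply/commr_sym/commr_prod => k _; apply/commr_subC/cPX.
  by rewrite cQP -mulrA ann_s ?mulr0.
have rel_u : q ^+ (d + c) *: ((\prod_(j <- s) X j) * u) = q ^+ (\sum_(j <- s) a j)%N *: u.
  apply: (scalerI (expf_neq0 (a h) q_neq0)); rewrite !scalerA -!exprD addnCA.
  have cXh : GRing.comm (X h) (\prod_(j <- s) X j) by apply: commr_prod.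
  have cPXh : GRing.comm P (X h * \prod_(j <- s) X j).
    by apply: commrM => //; apply: commr_prod.
  move: (congr1 (GRing.mul P) rel); rewrite -!scalerAr -/u mulrA cPXh.
  by rewrite -(mulrA _ P y) -/u cXh -mulrA Xh_u -scalerAr scalerA -!exprD.
have eig_u := IHs _ _ ann_u rel_u.
have [c0|c_gt0] := posnP c.
  have u_y : u = y by rewrite /u /P c0 big_ord0 mul1r.
  move=> j; rewrite in_cons => /orP[/eqP->|js]; last by rewrite -u_y eig_u.
  by rewrite -u_y Xh_u c0 addn0.
apply: (IHc y d ann_s _ rel); apply: (scale_expr_fixed_eq0 (ltn_addl d c_gt0)).
apply: (scalerI (expf_neq0 (\sum_(j <- s) a j)%N q_neq0)).
by rewrite scalerA mulrC -scalerA -[RHS]rel_u (eigen_prod eig_u) prodrXr.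
Qed.

End LowestEigenvalues.

End CommutingOperators.

Lemma vq_neq0 : vq != 0.
Proof. by rewrite /vq tofrac_eq0 polyX_eq0. Qed.

Lemma vqX_inj : injective (GRing.exp vq).
Proof.
move=> d e; rewrite /vq -!tofracXn => /eqP; rewrite tofrac_eq => /eqP de.
by have := congr1 (fun p : {poly rat} => size p) de; rewrite !size_polyXn => -[].
Qed.

Lemma vq_subV_neq0 : vq - vq^-1 != 0.
Proof.
rewrite subr_eq0; apply/eqP => /(congr1 (GRing.mul vq)).
by rewrite mulfV ?vq_neq0 // -expr2 -(expr0 vq) => /vqX_inj.
Qed.

Lemma vq_addV_neq0 : vq + vq^-1 != 0.
Proof.
rewrite -(opprK vq^-1) subr_eq0; apply/eqP => /(congr1 (GRing.mul vq)).
rewrite mulrN mulfV ?vq_neq0 // -expr2 => /(congr1 (fun x : Qv => x ^+ 2)).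
by rewrite -exprM sqrrN expr1n -(expr0 vq) => /vqX_inj.
Qed.

Definition qint (k : int) : Qv := (vq ^ k - vq ^ (- k)) / (vq - vq^-1).

Lemma qint0 : qint 0 = 0.
Proof. by rewrite /qint oppr0 subrr mul0r. Qed.

Lemma qintN1 : qint (-1) = -1.
Proof. by rewrite /qint opprK expr1z exprN1 -opprB mulNr mulfV ?vq_subV_neq0. Qed.

Lemma qint2 : qint 2 = vq + vq^-1.
Proof.
rewrite /qint -invr_expz expfz_n0addr // expr1z invfM.
have -> : vq * vq - vq^-1 * vq^-1 = (vq + vq^-1) * (vq - vq^-1) by ring.
by rewrite mulfK ?vq_subV_neq0.
Qed.

Lemma eqn_mod_small n a b : (1 < n)%N -> (a <= n.+1)%N -> (b <= n.+1)%N ->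
  (a == b %[mod n]) = [|| a == b, a + n == b | a == b + n].
Proof.
have modS_small k : (1 < n)%N -> (k <= n.+1)%N -> (k %% n = if k < n then k else k - n)%N.
  move=> n_gt1 kn; case: ltnP => nk; first by rewrite modn_small.
  by rewrite -{1}(subnKC nk) modnDl modn_small //; lia.
move=> n_gt1 an bn; rewrite (modS_small a) // (modS_small b) //.
by case: ltnP => ha; case: ltnP => hb; apply/idP/idP; lia.
Qed.

Lemma eqn_mod_addr_self n p k : (0 < k < n)%N -> (p + k == p %[mod n]) = false.
Proof.
by case/andP=> k_gt0 kn; rewrite -{2}[p]addn0 eqn_modDl mod0n modn_small // gtn_eqF.
Qed.

Lemma epsp_diag n i : epsp n i i = 1.
Proof. by rewrite /epsp eqxx. Qed.

Lemma epsp_pred n i : (1 < n)%N -> epsp n i.+1 i = -1.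
Proof. by move=> n_gt1; rewrite /epsp eqxx -addn1 eq_sym eqn_mod_addr_self. Qed.

Lemma epsp_far n i j :
  ~~ (j == i %[mod n]) -> ~~ (j.+1 == i %[mod n]) -> epsp n i j = 0.
Proof. by rewrite /epsp => /negbTE-> /negbTE->. Qed.

Lemma epspE n i j : n != 1%N ->
  epsp n i j = (j == i %[mod n])%:Z - (j.+1 == i %[mod n])%:Z.
Proof.
move=> n_neq1; rewrite /epsp; case: eqP => [ji|_]; last by case: eqP.
suff -> : (j.+1 == i %[mod n]) = false by [].
rewrite -ji -addn1 -{2}[j]addn0 eqn_modDl mod0n.
by case: n {ji} n_neq1 => [|[|n]] // _; rewrite modn_small.
Qed.

Lemma sum_epsp n i a b : n != 1%N -> (a <= b)%N ->
  \sum_(a <= j < b) epsp n i j = (a == i %[mod n])%:Z - (b == i %[mod n])%:Z.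
Proof.
move=> n_neq1 ab.
rewrite (telescope_sumr_eq (fun j => - (j == i %[mod n])%:Z)) => [|//|j _].
  by rewrite opprK addrC.
by rewrite epspE // opprK addrC.
Qed.

Lemma sum_epsp_rev n i a b c : n != 1%N -> (a <= b <= c.+1)%N ->
  \sum_(a <= j < b) epsp n i (c - j) =
    (c.+1 - b == i %[mod n])%:Z - (c.+1 - a == i %[mod n])%:Z.
Proof.
move=> n_neq1 /andP[ab bc].
rewrite (telescope_sumr_eq (fun j => (c.+1 - j == i %[mod n])%:Z)) // => j /andP[_ jb].
by rewrite epspE // subSS -subSn //; lia.
Qed.

Section Relations.
Variables (n r : nat) (A : algType Qv) (E F K Kinv : nat -> A).
Hypothesis HT : T_relations n r E F K Kinv.

Lemma K_comm i j : GRing.comm (K i) (K j).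
Proof. by case: HT => _ [KK _]; apply: KK. Qed.

Lemma K_Kinv i : K i * Kinv i = 1.
Proof. by case: HT => _ [_ [KKinv _]]; case: (KKinv i). Qed.

Lemma Kinv_K i : Kinv i * K i = 1.
Proof. by case: HT => _ [_ [KKinv _]]; case: (KKinv i). Qed.

Lemma K_E i j : K i * E j = vq ^ epsp n i j *: (E j * K i).
Proof. by case: HT => _ [_ [_ [KE _]]]; apply: KE. Qed.

Lemma K_F i j : K i * F j = vq ^ (- epsp n i j) *: (F j * K i).
Proof. by case: HT => _ [_ [_ [_ [KF _]]]]; apply: KF. Qed.

Lemma EF_sub i j : E i * F j - F j * E i =
  if i == j %[mod n] then (vq - vq^-1)^-1 *: (K i * Kinv i.+1 - Kinv i * K i.+1)
  else 0.
Proof. by case: HT => _ [_ [_ [_ [_ [EF _]]]]]; apply: EF. Qed.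

Lemma EF_comm i j : ~~ (i == j %[mod n]) -> GRing.comm (E i) (F j).
Proof. by move=> ij; apply/eqP; rewrite -subr_eq0 EF_sub (negbTE ij). Qed.

Lemma EE_comm i j :
  ~~ (i == j.+1 %[mod n]) -> ~~ (j == i.+1 %[mod n]) -> GRing.comm (E i) (E j).
Proof. by case: HT => _ [_ [_ [_ [_ [_ [EE _]]]]]] ij ji; case: (EE i j ij ji). Qed.

Lemma E_serre i j : i == j.+1 %[mod n] ->
  E i ^+ 2 * E j + E j * E i ^+ 2 = (vq + vq^-1) *: (E i * E j * E i).
Proof.
case: HT => _ [_ [_ [_ [_ [_ [_ [serre _]]]]]]] ij.
have [/eqP + _] := serre i j (introT orP (or_introl ij)).
by rewrite addrAC subr_eq0 => /eqP.
Qed.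

Lemma prod_K : \prod_(1 <= i < n.+1) K i = (vq ^+ r)%:A.
Proof. by case: HT => _ [_ [_ [_ [_ [_ [_ [_ [prodK _]]]]]]]]. Qed.

Lemma K_annihilator i : \prod_(k < r.+1) (K i - (vq ^+ k)%:A) = 0.
Proof. by case: HT => _ [_ [_ [_ [_ [_ [_ [_ [_ ann]]]]]]]]; have := ann i; rewrite big_mkord. Qed.

Lemma comm_Kinv x : (forall i, GRing.comm x (K i)) -> forall i, GRing.comm x (Kinv i).
Proof.
move=> xK i; rewrite /GRing.comm -[x * Kinv i]mul1r -(Kinv_K i) -!mulrA (mulrA (K i)).
by rewrite -xK -mulrA K_Kinv mulr1.
Qed.

Lemma comm_one_lam x lam : (forall i, GRing.comm x (K i)) ->
  GRing.comm x (one_lam n K Kinv lam).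
Proof.
move=> xK; apply: commr_prod => i _; apply: commr_prod => s _.
by apply/commr_scale/commrB; apply: commr_scale; [apply: xK | apply: comm_Kinv].
Qed.

Lemma weight_Kinv m t y : K m * y = vq ^ t *: y -> Kinv m * y = vq ^ (- t) *: y.
Proof.
move=> Ky; apply: (scalerI (expfz_neq0 t vq_neq0)).
rewrite scalerA -expfzDr ?vq_neq0 // subrr expr0z scale1r scalerAr -Ky.
by rewrite mulrA Kinv_K mul1r.
Qed.

Lemma weight_E m j t y : K m * y = vq ^ t *: y ->
  K m * (E j * y) = vq ^ (epsp n m j + t) *: (E j * y).
Proof.
move=> Ky; rewrite mulrA K_E -scalerAl -mulrA Ky -scalerAr scalerA.
by rewrite -expfzDr ?vq_neq0.
Qed.

Lemma weight_F m j t y : K m * y = vq ^ t *: y ->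
  K m * (F j * y) = vq ^ (- epsp n m j + t) *: (F j * y).
Proof.
move=> Ky; rewrite mulrA K_F -scalerAl -mulrA Ky -scalerAr scalerA.
by rewrite -expfzDr ?vq_neq0.
Qed.

Lemma weight_prod_E m t y (s : seq nat) (f : nat -> nat) : K m * y = vq ^ t *: y ->
  K m * ((\prod_(j <- s) E (f j)) * y) =
    vq ^ (\sum_(j <- s) epsp n m (f j) + t) *: ((\prod_(j <- s) E (f j)) * y).
Proof.
move=> Ky; elim: s => [|j s IHs]; first by rewrite !big_nil mul1r add0r.
by rewrite !big_cons -mulrA (weight_E _ IHs) addrA.
Qed.

Lemma weightN1_eq0 m y : K m * y = vq ^ (-1) *: y -> y = 0.
Proof.
move=> Ky; have := eigen_prod_subC (index_enum 'I_r.+1) (fun k => vq ^+ k) Ky.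
rewrite K_annihilator mul0r => /esym/eqP; rewrite scaler_eq0 => /orP[|/eqP //].
case/prodf_eq0 => k _; rewrite subr_eq0 exprN1 => /eqP/(congr1 (GRing.mul vq)).
by rewrite mulfV ?vq_neq0 // -exprS -(expr0 vq) => /vqX_inj.
Qed.

Lemma EF_sub_weight i s t y : K i * y = vq ^ s *: y -> K i.+1 * y = vq ^ t *: y ->
  E i * (F i * y) - F i * (E i * y) = qint (s - t) *: y.
Proof.
move=> Kiy Ki1y; rewrite !mulrA -mulrBl EF_sub eqxx -scalerAl.
rewrite mulrBl -!mulrA (weight_Kinv Ki1y) Ki1y -!scalerAr Kiy (weight_Kinv Kiy).
rewrite !scalerA -scalerBl scalerA /qint opprB !expfzDr ?vq_neq0 //.
by rewrite mulrC (mulrC (vq ^ s)).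
Qed.

Lemma K_sub_Kinv i : K i - Kinv i = (K i - 1) * (Kinv i * (K i + 1)).
Proof.
rewrite mulrA mulrBl K_Kinv mul1r mulrBl !mulrDr !mulr1 mul1r Kinv_K.
by rewrite opprD addrA addrK.
Qed.

(* The exponent (j <= r) is omega j. *)
Lemma one_omega_annihilator j : (1 <= j <= n)%N ->
  (\prod_(k < r.+1 - (j <= r)) (K j - (vq ^+ ((j <= r) + k))%:A)) *
    one_lam n K Kinv (omega r) = 0.
Proof.
case/andP=> j_gt0 jn; case: leqP => [jr|rj]; last by rewrite subn0 K_annihilator mul0r.
rewrite subn1 /=; set P := \prod_(k < r) _.
have cPK i : GRing.comm P (K i) by apply/commr_sym/commr_prod_subC/K_comm.
apply: (mulr_prod_eq0 (j := j)); first by rewrite mem_index_iota j_gt0 ltnS.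
  move=> i _; apply: commr_prod => s _; apply/commr_scale/commrB; apply: commr_scale.
    exact: cPK.
  exact: comm_Kinv.
rewrite /omega j_gt0 jr big_nat1 subrr expr0z !scale1r -scalerAr K_sub_Kinv !mulrA.
suff -> : P * (K j - 1) = 0 by rewrite !mul0r scaler0.
have := K_annihilator j; rewrite big_ord_recl expr0 scale1r.
have cKP : GRing.comm (K j - 1) P by apply/commr_sym/commrB; [apply: cPK | apply: commr1].
rewrite -cKP; suff -> : P = \prod_(i < r) (K j - (vq ^+ lift ord0 i)%:A) by [].
by apply: eq_bigr => k _; rewrite lift0.
Qed.

Lemma K_one_omega m : (r <= n)%N -> (1 <= m <= r)%N ->
  K m * one_lam n K Kinv (omega r) = vq *: one_lam n K Kinv (omega r).
Proof.
move=> rn /andP[m_gt0 mr].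
have sum_omega : (\sum_(1 <= j < n.+1) (j <= r) = r)%N.
  rewrite (big_cat_nat _ (n := r.+1)) //= ?ltnS // [X in (_ + X)%N]big1_seq ?addn0.
    rewrite (eq_big_nat _ _ (F2 := fun=> 1%N)) => [|j /andP[_ jr]]; last by rewrite -ltnS jr.
    by rewrite sum_nat_const_nat muln1 subn1.
  by move=> j; rewrite leqNgt mem_index_iota => /andP[_ /andP[->]].
have := eigen_lowest_of_prod vqX_inj K_comm (s := index_iota 1 n.+1)
  (a := fun j => (j <= r)%N : nat) (b := fun j => (r.+1 - (j <= r))%N) (d := 0)
  (y := one_lam n K Kinv (omega r)).
move=> /(_ _ _ m) -> //; first by rewrite mr expr1.
- by move=> j; rewrite mem_index_iota; apply: one_omega_annihilator.
- by rewrite expr0 scale1r prod_K mulr_algl sum_omega.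
- by rewrite mem_index_iota m_gt0 ltnS (leq_trans mr).
Qed.

Lemma FE_comm_K j i : GRing.comm (F j * E j) (K i).
Proof.
apply/esym; rewrite mulrA K_F -scalerAl -[F j * K i * E j]mulrA K_E -scalerAr scalerA mulrA.
by rewrite -expfzDr ?vq_neq0 // addNr expr0z scale1r.
Qed.

Lemma FE_comm_E j k : ~~ (k == j %[mod n]) -> ~~ (j == k.+1 %[mod n]) ->
  ~~ (k == j.+1 %[mod n]) -> GRing.comm (F j * E j) (E k).
Proof. by move=> kj jk1 kj1; apply/commr_sym/commrM; [apply: EF_comm | apply: EE_comm]. Qed.

Lemma FE_comm_prod_E j (s : seq nat) (f : nat -> nat) :
  (forall k, k \in s -> [/\ ~~ (f k == j %[mod n]), ~~ (j == (f k).+1 %[mod n])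
                           & ~~ (f k == j.+1 %[mod n])]) ->
  GRing.comm (F j * E j) (\prod_(k <- s) E (f k)).
Proof. by move=> sf; rewrite big_seq; apply: commr_prod => k /sf[]; apply: FE_comm_E. Qed.

Section RankTwo.
Variables (p : nat) (x : A).
Hypothesis n_gt2 : (2 < n)%N.

Let n_gt1 : (1 < n)%N. Proof. exact: ltnW. Qed.

Let succ_p : (p.+1 == p %[mod n]) = false.
Proof. by rewrite -addn1 eqn_mod_addr_self. Qed.

Let succ2_p : (p.+2 == p %[mod n]) = false.
Proof. by rewrite -addn2 eqn_mod_addr_self. Qed.

Let pred_p : (p == p.+1 %[mod n]) = false.
Proof. by rewrite eq_sym succ_p. Qed.

Lemma FE_EEE_eq_EE : K p * x = vq ^ 0 *: x -> K p.+1 * x = vq ^ 1 *: x ->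
  F p * (E p * (E p.+1 * (E p * x))) = E p * (E p.+1 * x).
Proof.
move=> Kx0 Kx1.
have e_p_p1 : epsp n p p.+1 = 0 by rewrite epsp_far ?succ_p ?succ2_p.
have Fx : F p * x = 0 by apply: (@weightN1_eq0 p); rewrite (weight_F _ Kx0) epsp_diag.
have FEx : F p * (E p * x) = x.
  move/eqP: (EF_sub_weight Kx0 Kx1); rewrite Fx mulr0 !sub0r qintN1 scaleN1r.
  by rewrite eqr_opp => /eqP.
have KpEEx : K p * (E p.+1 * (E p * x)) = vq ^ 1 *: (E p.+1 * (E p * x)).
  by rewrite (weight_E _ (weight_E _ Kx0)) epsp_diag e_p_p1.
have Kp1EEx : K p.+1 * (E p.+1 * (E p * x)) = vq ^ 1 *: (E p.+1 * (E p * x)).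
  by rewrite (weight_E _ (weight_E _ Kx1)) epsp_diag epsp_pred.
move/eqP: (EF_sub_weight KpEEx Kp1EEx).
rewrite subrr qint0 scale0r subr_eq0 => /eqP <-; congr (_ * _).
by rewrite mulrA -(EF_comm (negbT succ_p)) -mulrA FEx.
Qed.

Lemma EEFE_eq_EE : K p.+1 * x = vq ^ 1 *: x -> K p.+2 * x = vq ^ 1 *: x ->
  E p.+1 * (E p * (F p.+1 * (E p.+1 * x))) = E p * (E p.+1 * x).
Proof.
move=> Kx1 Kx2.
have EFx : E p.+1 * (F p.+1 * x) = F p.+1 * (E p.+1 * x).
  by apply/eqP; rewrite -subr_eq0 (EF_sub_weight Kx1 Kx2) subrr qint0 scale0r.
rewrite -EFx; set z := F p.+1 * x.
have Ez : E p * z = 0.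
  rewrite /z mulrA (EF_comm (negbT pred_p)) -mulrA; apply: (@weightN1_eq0 p.+1).
  by rewrite (weight_F _ (weight_E _ Kx1)) epsp_diag epsp_pred.
have EEz : E p.+1 * (E p.+1 * z) = (vq + vq^-1) *: (E p.+1 * x).
  have KEx1 := weight_E p.+1 Kx1; have KEx2 := weight_E p.+1 Kx2.
  rewrite epsp_diag in KEx1; rewrite epsp_pred // in KEx2.
  have EEx : E p.+1 * (E p.+1 * x) = 0.
    by apply: (@weightN1_eq0 p.+2); rewrite (weight_E _ KEx2) epsp_pred.
  move/eqP: (EF_sub_weight KEx1 KEx2); rewrite EEx mulr0 subr0 qint2 => /eqP <-.
  by rewrite /z EFx.
clearbody z; apply: (scalerI vq_addV_neq0).
rewrite !mulrA [LHS]scalerAl -E_serre // mulrDl !expr2 -!mulrA Ez !mulr0 add0r.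
by rewrite EEz -scalerAr.
Qed.

End RankTwo.

Lemma FE_intertwine p Phi x : (2 < n)%N ->
  GRing.comm (F p * E p) Phi -> GRing.comm (F p.+1 * E p.+1) x ->
  K p * x = vq ^ 0 *: x -> K p.+1 * x = vq ^ 1 *: x -> K p.+2 * x = vq ^ 1 *: x ->
  let M := Phi * (E p.+1 * (E p * x)) in
  (vq *: (F p * E p) - 1) * M = M * (vq *: (F p.+1 * E p.+1) - 1).
Proof.
move=> n_gt2 cPhi cx Kx0 Kx1 Kx2 M; rewrite /M mulrBl mulrBr mul1r mulr1.
rewrite -scalerAl -scalerAr; congr (vq *: _ - _).
rewrite (mulrA (F p * E p)) cPhi -!mulrA (FE_EEE_eq_EE n_gt2 Kx0 Kx1).
by rewrite -cx -mulrA (EEFE_eq_EE n_gt2 Kx1 Kx2).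
Qed.

Section Factorization.
Variable p : nat.
Hypotheses (p_gt0 : (0 < p)%N) (p2r : (p.+2 <= r)%N).

Definition M_head := \prod_(0 <= j < r.-1 - p.+1) E (r.-1 - j)%N.

Definition M_tail := (\prod_((r.-1 - p.+1).+2 <= j < r.-1) E (r.-1 - j)%N) *
  ((\prod_(r.+1 <= j < n.+1) E j) * one_lam n K Kinv (omega r)).

Lemma M_factor :
  (\prod_(0 <= j < r.-1) E (r.-1 - j)%N) * (\prod_(r.+1 <= j < n.+1) E j) *
    one_lam n K Kinv (omega r) = M_head * (E p.+1 * (E p * M_tail)).
Proof.
rewrite /M_head /M_tail !mulrA; congr (_ * _ * _).
rewrite (big_cat_nat _ (n := r.-1 - p.+1)) //= ?leq_subr //.
rewrite (@big_ltn _ _ _ (r.-1 - p.+1)) ?(@big_ltn _ _ _ (r.-1 - p.+1).+1); try lia.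
by rewrite !mulrA; congr (_ * E _ * E _ * _); lia.
Qed.

Hypothesis rn : (r < n)%N.

Lemma FE_comm_M_head : GRing.comm (F p * E p) M_head.
Proof.
apply: FE_comm_prod_E => j; rewrite mem_index_iota => j_range.
by split; rewrite eqn_mod_small; lia.
Qed.

Lemma FE_comm_M_tail : GRing.comm (F p.+1 * E p.+1) M_tail.
Proof.
apply: commrM; [|apply: commrM]; last exact: comm_one_lam (FE_comm_K _).
all: apply: FE_comm_prod_E => j; rewrite mem_index_iota => j_range.
all: by split; rewrite eqn_mod_small; lia.
Qed.

Lemma weights_M_tail : [/\ K p * M_tail = vq ^ 0 *: M_tail,
  K p.+1 * M_tail = vq ^ 1 *: M_tail & K p.+2 * M_tail = vq ^ 1 *: M_tail].
Proof.
have K_tail m : (1 <= m <= r)%N ->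
    K m * M_tail = vq ^ (1 - (p == m %[mod n])%:Z) *: M_tail.
  move=> m_range; have KO : K m * one_lam n K Kinv (omega r) =
      vq ^ 1 *: one_lam n K Kinv (omega r) by rewrite expr1z K_one_omega // ltnW.
  rewrite /M_tail (weight_prod_E _ _ (weight_prod_E _ _ KO)) sum_epsp ?sum_epsp_rev; try lia.
  have -> : (r.+1 == m %[mod n]) = false by rewrite eqn_mod_small; lia.
  have -> : (r.-1.+1 - r.-1 = 1)%N by lia.
  have -> : (r.-1.+1 - (r.-1 - p.+1).+2 = p)%N by lia.
  rewrite -[n.+1]add1n modnDr; congr (vq ^ _ *: _).
  by case: (1 == m %[mod n]); case: (p == m %[mod n]).
have p_m m : (p < m <= r)%N -> (p == m %[mod n]) = false.
  by move=> m_range; rewrite eqn_mod_small; lia.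
split; first by rewrite K_tail ?eqxx //; lia.
  by rewrite K_tail ?(p_m p.+1) //; lia.
by rewrite K_tail ?(p_m p.+2) //; lia.
Qed.

End Factorization.

End Relations.

Theorem lemma2p3p6 (r n i : nat) :
  (3 <= r)%N -> (r < n)%N -> (1 < i < r)%N ->
  forall (A : algType Qv) (E F K Kinv : nat -> A),
  T_relations n r E F K Kinv ->
  let M := (\prod_(0 <= j < r.-1) E (r.-1 - j)%N) *
           (\prod_(r.+1 <= j < n.+1) E j) * one_lam n K Kinv (omega r) in
  (vq *: (F i.-1 * E i.-1) - 1) * M = M * (vq *: (F i * E i) - 1).
Proof.
move=> r_ge3 rn /andP[i_gt1 ir] A E F K Kinv HT M; rewrite /M {M}.
case: i i_gt1 ir => [//|p] p_gt0 p2r /=.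
have [Kx0 Kx1 Kx2] := weights_M_tail HT p_gt0 p2r rn.
rewrite (M_factor _ _ _ _ p_gt0 p2r).
apply: (FE_intertwine HT _ (FE_comm_M_head HT p_gt0 p2r rn)
  (FE_comm_M_tail HT p_gt0 p2r rn) Kx0 Kx1 Kx2).
exact: leq_trans r_ge3 (ltnW rn).
Qed.
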